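(* Let $\mathcal{A}$ be a finite alphabet with $\#\mathcal{A}\ge 2$ and let $\mathbf{p}$ be an irreducible pair on $\mathcal{A}$. Then the labeled Rauzy class of $\mathbf{p}$ contains a piece-wise order reversing pair.
   Context: Let $n=\#\mathcal{A}$. A pair on $\mathcal{A}$ is $\mathbf{p}=(p_0,p_1)$ with $p_0,p_1:\mathcal{A}\to\{1,\dots,n\}$ bijections ($p_\varepsilon$ is ''row $\varepsilon$''; row $\varepsilon$ lists the letters $p_\varepsilon^{-1}(1),\dots,p_\varepsilon^{-1}(n)$ in order). $\mathbf{p}$ is irreducible if $p_0^{-1}\{1,\dots,k\}\neq p_1^{-1}\{1,\dots,k\}$ for every $1\le k<n$. For irreducible $\mathbf{p}$ and $\varepsilon\in\{0,1\}$, the Rauzy move of type $\varepsilon$ gives $\varepsilon\mathbf{p}=(p_0',p_1')$ with $p'_\varepsilon=p_\varepsilon$ and, writing $z=p_\varepsilon^{-1}(n)$: $p'_{1-\varepsilon}(b)=p_{1-\varepsilon}(b)$ if $p_{1-\varepsilon}(b)\le p_{1-\varepsilon}(z)$; $p'_{1-\varepsilon}(b)=p_{1-\varepsilon}(b)+1$ if $p_{1-\varepsilon}(z)<p_{1-\varepsilon}(b)<n$; $p'_{1-\varepsilon}(b)=p_{1-\varepsilon}(z)+1$ if $p_{1-\varepsilon}(b)=n$. These moves are bijections of the set of irreducible pairs. The labeled Rauzy class of $\mathbf{p}$ is the smallest set of irreducible pairs containing $\mathbf{p}$ and closed under both Rauzy moves (equivalently, the set of pairs reachable from $\mathbf{p}$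 by sequences of Rauzy moves). A pair is standard if $p_0^{-1}(1)=p_1^{-1}(n)$ and $p_1^{-1}(1)=p_0^{-1}(n)$. A standard pair $\mathbf{p}$ is piece-wise order reversing if there are integers $2=k_0<k_1<\dots<k_\ell=n$ such that for each $1\le i\le\ell$, $p_0^{-1}\{k_{i-1},\dots,k_i-1\}=p_1^{-1}\{k_{i-1},\dots,k_i-1\}$, and every $b$ with $k_{i-1}\le p_0(b)<k_i$ satisfies $p_0(b)+p_1(b)=k_{i-1}+k_i-1$. *)

From mathcomp Require Import all_boot.
Set Implicit Arguments. Unset Strict Implicit. Unset Printing Implicit Defensive.

Section Rauzy.
Variable A : finType.

(* A pair on A: two rows p_0, p_1 : A -> nat, positions are 1..n with n = #|A|. *)
Definition pairT := ((A -> nat) * (A -> nat))%type.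

Definition row (p : pairT) (e : bool) : A -> nat := if e then p.2 else p.1.

Definition is_bij (f : A -> nat) : Prop :=
  [/\ forall a, 1 <= f a <= #|A|,
      injective f &
      forall k, 1 <= k <= #|A| -> exists a, f a = k].

Definition is_pair (p : pairT) : Prop := is_bij p.1 /\ is_bij p.2.

Definition irreducible (p : pairT) : Prop :=
  is_pair p /\
  forall k, 1 <= k < #|A| ->
    [set a | 1 <= p.1 a <= k] != [set a | 1 <= p.2 a <= k].

Definition last_letter (p : pairT) (e : bool) : option A :=
  [pick a | row p e a == #|A|].

Definition rauzy_row (p : pairT) (e : bool) : A -> nat :=
  let q := row p (~~ e) in
  match last_letter p e with
  | None => q
  | Some z =>
      fun b => if q b <= q z then q b
               else if q b < #|A| then (q b).+1
               else (q z).+1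
  end.

(* Rauzy move of type e: e = false is type 0, e = true is type 1 *)
Definition rauzy (e : bool) (p : pairT) : pairT :=
  if e then (rauzy_row p true, p.2) else (p.1, rauzy_row p false).

Inductive in_rauzy_class (p : pairT) : pairT -> Prop :=
  | rc_refl : in_rauzy_class p p
  | rc_step q e : in_rauzy_class p q -> irreducible q ->
                  in_rauzy_class p (rauzy e q).

Definition standard (p : pairT) : Prop :=
  (exists a, p.1 a = 1 /\ p.2 a = #|A|) /\
  (exists b, p.2 b = 1 /\ p.1 b = #|A|).

(* piece-wise order reversing: integers 2 = k_0 < k_1 < ... < k_l = n,
   encoded as the list 2 :: ks *)
Definition pw_order_reversing (p : pairT) : Prop :=
  standard p /\
  exists ks : seq nat,
    [/\ path ltn 2 ks, last 2 ks = #|A| &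
        forall i, i < size ks ->
          let a := nth 0 (2 :: ks) i in
          let b := nth 0 ks i in
          [set x | a <= p.1 x < b] = [set x | a <= p.2 x < b] /\
          (forall x, a <= p.1 x < b -> p.1 x + p.2 x = a + b - 1)].

End Rauzy.

(* Encode a pair by its two rows, read as sequences of letters. A Rauzy move
   whose winner [z] ends one row removes the last letter of the other row and
   reinserts it right after [z]; iterating it, the part of the other row that
   follows [z] can be rotated at will. Irreducibility provides rotations that
   move the last letter of the top row strictly to the left in the bottom row,
   until it comes first; one more rotation gives a standard pair
   [(a T z, z B a)]. On standard pairs, four rotations exchange two adjacent
   initial blocks of [T] and [B] that end with the same two letters, and such
   exchanges bring [(T, B)] to a layered form [(V1 .. Vk, rev V1 .. rev Vk)],
   which is precisely a piece-wise order reversing pair. *)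

From mathcomp Require Import all_boot zify.
From Stdlib Require Import FunctionalExtensionality Relations.
Set Implicit Arguments. Unset Strict Implicit. Unset Printing Implicit Defensive.

Ltac seq_norm :=
  rewrite -?cats1 ?rev_cat ?rev_cons -?cats1 /=; do 5 (rewrite -?catA /=);
  rewrite ?cats0.

Lemma cat_eq_size_r (T : eqType) (s1 s2 t1 t2 : seq T) :
  s1 ++ s2 = t1 ++ t2 -> size s2 = size t2 -> s1 = t1 /\ s2 = t2.
Proof.
move=> E Hs; have Hs1 : size s1 = size t1.
  by move/(congr1 size): E; rewrite !size_cat Hs => /addIn.
by move/eqP: E; rewrite eqseq_cat // => /andP [/eqP -> /eqP ->].
Qed.

Lemma split_size_r (T : Type) (s : seq T) n : n <= size s ->
  exists s1 s2, s = s1 ++ s2 /\ size s2 = n.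
Proof.
move=> Hn; exists (take (size s - n) s), (drop (size s - n) s).
by rewrite cat_take_drop size_drop subKn.
Qed.

Lemma uniq_not_eqi_witness (T : eqType) (s t : seq T) :
  uniq s -> size t <= size s -> ~ s =i t -> exists2 y, y \in s & y \notin t.
Proof.
move=> Hu Hsz Hne; apply/(@allPn _ (mem t)); apply/negP => /allP Hsub.
by have [_] := uniq_min_size Hu Hsub Hsz.
Qed.

Definition swap_step {T : eqType} (x y : seq T * seq T) : Prop :=
  exists X1 Y1 R1 X2 Y2 R2 (w v : T),
    x = (rcons X1 w ++ rcons Y1 v ++ R1, rcons X2 w ++ rcons Y2 v ++ R2) /\
    y = (rcons Y1 v ++ rcons X1 w ++ R1, rcons Y2 v ++ rcons X2 w ++ R2).

Notation swap_reach := (clos_refl_trans _ swap_step).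

Section BlockSwap.
Variable T : eqType.
Implicit Types (t b : seq T) (x y : seq T * seq T).

Lemma swap_reach_perm x y :
  swap_reach x y -> perm_eq x.1 y.1 /\ perm_eq x.2 y.2.
Proof.
elim=> [{}x {}y [X1 [Y1 [R1 [X2 [Y2 [R2 [w [v [-> ->]]]]]]]]]|//|].
- by rewrite !catA !perm_cat2r; split; rewrite perm_catC.
- move=> {}x y' z _ [H1 H2] _ [H3 H4].
  by split; [exact: perm_trans H3 | exact: perm_trans H4].
Qed.

Lemma swap_reach_catr x y V W : swap_reach x y ->
  swap_reach (x.1 ++ V, x.2 ++ W) (y.1 ++ V, y.2 ++ W).
Proof.
elim=> [{}x {}y [X1 [Y1 [R1 [X2 [Y2 [R2 [w [v [-> ->]]]]]]]]]||].
- apply: rt_step; exists X1, Y1, (R1 ++ V), X2, Y2, (R2 ++ W), w, v.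
  by rewrite -!catA.
- by move=> {}x; apply: rt_refl.
- by move=> {}x y' z _ H1 _ H2; apply: rt_trans H1 H2.
Qed.

Lemma filter_rcons_split (p : pred T) s u v (w : T) :
  p w -> filter p s = rcons u w ++ v ->
  exists s1 s2, [/\ s = rcons s1 w ++ s2, filter p s1 = u & filter p s2 = v].
Proof.
move=> pw; elim: s u => [|a s IH] u /=; first by case: u.
case: ifP => pa.
  case: u => [|a' u] /=; case=> <-.
    by move=> <-; exists [::], s.
  move=> /IH [s1 [s2 [-> H1 H2]]].
  by exists (a :: s1), s2; rewrite /= pa H1.
move=> /IH [s1 [s2 [-> H1 H2]]].
by exists (a :: s1), s2; rewrite /= pa H1.
Qed.

Lemma swap_step_insert (a : T) x y t : swap_step x y ->
  filter (predC1 a) t = x.1 -> a \notin x.2 ->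
  exists2 t', filter (predC1 a) t' = y.1 &
              swap_step (t, x.2 ++ [:: a]) (t', y.2 ++ [:: a]).
Proof.
case=> [X1 [Y1 [R1 [X2 [Y2 [R2 [w [v [-> ->]]]]]]]]] /= Hf Ha.
have pw : predC1 a w.
  by apply/eqP=> Ew; move: Ha; rewrite Ew mem_cat mem_rcons inE eqxx.
have pv : predC1 a v.
  by apply/eqP=> Ev; move: Ha; rewrite Ev !mem_cat !mem_rcons !inE eqxx orbT.
have [t1 [t2 [-> H1 H2]]] := filter_rcons_split pw Hf.
have [t3 [t4 [-> H3 H4]]] := filter_rcons_split pv H2.
exists (rcons t3 v ++ rcons t1 w ++ t4).
  by rewrite !filter_cat !filter_rcons pv pw H1 H3 H4.
by exists t1, t3, t4, X2, Y2, (R2 ++ [:: a]), w, v; rewrite -!catA.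
Qed.

Lemma swap_reach_insert (a : T) x y : swap_reach x y ->
  forall t, filter (predC1 a) t = x.1 -> a \notin x.2 ->
  exists2 t', filter (predC1 a) t' = y.1 &
              swap_reach (t, x.2 ++ [:: a]) (t', y.2 ++ [:: a]).
Proof.
elim=> [{}x {}y Hs t Hf Ha|{}x t Hf _|{}x y' z Hxy IH1 _ IH2 t Hf Ha].
- by have [t' ? ?] := swap_step_insert Hs Hf Ha; exists t'; last exact: rt_step.
- by exists t; last exact: rt_refl.
- have [t1 Hf1 H1] := IH1 t Hf Ha.
  have Ha' : a \notin y'.2 by rewrite -(perm_mem (swap_reach_perm Hxy).2).
  have [t2 Hf2 H2] := IH2 t1 Hf1 Ha'.
  by exists t2; last exact: rt_trans H1 H2.
Qed.

Inductive layered : seq T -> seq T -> Prop :=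
| layered_nil : layered [::] [::]
| layered_snoc t b V : layered t b -> V != [::] -> layered (t ++ V) (b ++ rev V).

Lemma layered_perm t b : layered t b -> perm_eq t b.
Proof.
elim=> // t0 b0 V _ IH _.
by rewrite (perm_cat IH) // perm_sym perm_rev.
Qed.

Definition reaches_rev_block (x : seq T * seq T) : Prop :=
  exists H H' V, V != [::] /\ swap_reach x (H ++ V, H' ++ rev V).

Lemma swap_insert_inside U U' V1 (v x : T) R :
  swap_step (U ++ rcons V1 v ++ x :: R, U' ++ rev (rcons V1 v ++ R) ++ [:: x])
            ((x :: U ++ V1) ++ v :: R, (rcons (rev V1) x ++ U') ++ rev (v :: R)).
Proof.
exists (U ++ V1), [::], R, (U' ++ rev R), (rev V1), [::], v, x.
by split; congr pair; seq_norm.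
Qed.

Lemma swap_insert_before L Q U1 U2 V0 (x u v : T) :
  reaches_rev_block
    (L ++ x :: u :: Q ++ rcons V0 v, (U1 ++ u :: U2) ++ rev (rcons V0 v) ++ [:: x]).
Proof.
have step1 : swap_step
    (L ++ x :: u :: Q ++ rcons V0 v, (U1 ++ u :: U2) ++ rev (rcons V0 v) ++ [:: x])
    (rcons (Q ++ V0) v ++ rcons (rcons L x) u,
     rcons U2 v ++ rcons U1 u ++ rcons (rev V0) x).
  exists (rcons L x), (Q ++ V0), [::], U1, U2, (rcons (rev V0) x), u, v.
  by split; congr pair; seq_norm.
case/lastP: V0 step1 => [|V0 v'] step1.
  exists (rcons Q v ++ L), (rcons U2 v ++ U1), [:: x; u]; split=> //.
  by apply: rt_step; move: step1; congr swap_step; congr pair; seq_norm.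
exists (rcons (v :: L) x ++ Q ++ V0), (rcons (rev V0) x ++ rcons U2 v ++ U1), [:: v'; u].
split=> //; apply: rt_trans (rt_step _ _ _ _ step1) (rt_step _ _ _ _ _).
exists (Q ++ V0), (v :: L), [:: u], (rcons U2 v ++ rcons U1 u), (rev V0), [::], v', x.
by split; congr pair; seq_norm.
Qed.

(* At most two swaps, depending on where [x] falls relative to the last block. *)
Lemma layered_insert L R (x : T) t b : layered t b -> L ++ R = t ->
  reaches_rev_block (L ++ x :: R, b ++ [:: x]).
Proof.
case=> [|U U' V HUU' HV].
  case: L => [|? ?] //; case: R => [|? ?] // _.
  by exists [::], [::], [:: x]; split=> //; apply: rt_refl.
move=> E; case: (eqVneq R [::]) => [->|HR].
  by exists L, (U' ++ rev V), [:: x]; split=> //; apply: rt_refl.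
case: (ltngtP (size R) (size V)) => Hsz.
- have [V1 [V2 [EV HV2]]] := split_size_r (ltnW Hsz).
  move: E; rewrite EV catA => /cat_eq_size_r /(_ (esym HV2)) [EL ER].
  have : V1 != [::] by apply: contraTneq Hsz => E1; rewrite EV E1 -ER ltnn.
  case/lastP: V1 EV EL {Hsz} => // V1 v EV EL _.
  exists (x :: U ++ V1), (rcons (rev V1) x ++ U'), (v :: R); split=> //.
  apply: rt_step; rewrite EL -ER.
  by move: (swap_insert_inside U U' V1 v x R); rewrite -!catA.
- case: R HR E Hsz => // u R _ E /= Hsz.
  have [Q [V2 [EQ HV2]]] := split_size_r Hsz.
  rewrite EQ -cat_cons catA in E; have [EU EV2] := cat_eq_size_r E HV2.
  have : u \in U' by rewrite -(perm_mem (layered_perm HUU')) -EU mem_cat inE eqxx orbT.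
  case/splitPr => U1 U2.
  case/lastP: V HV EV2 {Hsz HV2 E} => // V0 v _ EV2.
  by move: (swap_insert_before L Q U1 U2 V0 x u v); rewrite EQ EV2 -!catA.
- move: E => /cat_eq_size_r /(_ Hsz) [-> ->].
  exists U, U', (x :: V); split=> //.
  by rewrite rev_cons -cats1 catA; apply: rt_refl.
Qed.

Lemma filter_predC1_id (x : T) s : x \notin s -> filter (predC1 x) s = s.
Proof.
move=> Hx; apply/all_filterP/allP => y Hy /=; apply/eqP => E.
by move: Hx; rewrite -E Hy.
Qed.

Lemma swap_reach_last_block t bs (x : T) ts' bs' : uniq t -> perm_eq t (rcons bs x) ->
  swap_reach (filter (predC1 x) t, bs) (ts', bs') -> layered ts' bs' ->
  reaches_rev_block (t, rcons bs x).
Proof.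
move=> Hu Hp Hr Hl.
have Hxbs : x \notin bs by move: (perm_uniq Hp); rewrite Hu rcons_uniq => /esym /andP [].
have [t' Hft' Hr'] := swap_reach_insert (a := x) Hr erefl Hxbs.
have [Ptt' _] := swap_reach_perm Hr'.
have Hut' : uniq t' by rewrite -(perm_uniq Ptt').
have Hxt' : x \in t' by rewrite -(perm_mem Ptt') (perm_mem Hp) mem_rcons mem_head.
case/splitPr: Hxt' Hft' Hr' Hut' => L R /= Hft' Hr' Hut'.
have HLR : L ++ R = ts'.
  move: Hut'; rewrite -Hft' cat_uniq /= negb_or => /and4P [_ /andP [HxL _] HxR _].
  by rewrite filter_cat /= eqxx !filter_predC1_id.
have [H [H' [V [HV Hr2]]]] := layered_insert x Hl HLR.
by exists H, H', V; split=> //; rewrite -cats1; apply: rt_trans Hr' Hr2.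
Qed.

(* Induction on the length: remove the last letter [x] of the bottom row, layer
   the rest, reinsert [x], split off the last block and layer what remains. *)
Lemma swap_reach_layered t b : uniq t -> perm_eq t b ->
  exists t' b', swap_reach (t, b) (t', b') /\ layered t' b'.
Proof.
move: {2}(size t) (leqnn (size t)) => n.
elim: n t b => [|n IH] t b Hs Hu Hp.
  move: Hs Hp; rewrite leqn0 size_eq0 => /eqP ->; rewrite perm_sym => /perm_nilP ->.
  by exists [::], [::]; split; [apply: rt_refl | apply: layered_nil].
case/lastP: b Hp => [|bs x] Hp.
  move/perm_nilP: Hp => ->.
  by exists [::], [::]; split; [apply: rt_refl | apply: layered_nil].
have Hxbs : x \notin bs by move: (perm_uniq Hp); rewrite Hu rcons_uniq => /esym /andP [].
have Hts : size (filter (predC1 x) t) <= n.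
  rewrite -rem_filter // size_rem ?(perm_mem Hp) ?mem_rcons ?mem_head //.
  by move: Hs; case: (size t).
have Htsp : perm_eq (filter (predC1 x) t) bs.
  have := perm_filter (predC1 x) Hp.
  by rewrite filter_rcons /= eqxx /= (filter_predC1_id Hxbs).
have [ts' [bs' [Hr Hl]]] := IH _ _ Hts (filter_uniq _ Hu) Htsp.
have [H [H' [V [HV Hr3]]]] := swap_reach_last_block Hu Hp Hr Hl.
have [P1 P2] := swap_reach_perm Hr3.
have HHu : uniq (H ++ V) by rewrite -(perm_uniq P1).
have HHp : perm_eq H H'.
  rewrite -(perm_cat2r V); apply: (@perm_trans _ (H' ++ rev V)).
    by apply: perm_trans P2; apply: perm_trans Hp; rewrite perm_sym.
  by rewrite perm_cat2l perm_rev.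
have HHs : size H <= n.
  move: (perm_size P1) Hs; rewrite size_cat /= => -> Hs.
  by rewrite -ltnS; apply: leq_trans Hs; rewrite -addn1 leq_add2l lt0n size_eq0.
have HHu' : uniq H by move: HHu; rewrite cat_uniq => /andP [].
have [H2 [H2' [Hr4 Hl4]]] := IH _ _ HHs HHu' HHp.
exists (H2 ++ V), (H2' ++ rev V); split; last exact: layered_snoc.
exact: rt_trans Hr3 (swap_reach_catr V (rev V) Hr4).
Qed.

Lemma index_rev s (x : T) : uniq s -> x \in s ->
  index x (rev s) + index x s = (size s).-1.
Proof.
move=> Hu Hx; have Hi : index x s < size s by rewrite index_mem.
have E : nth x (rev s) (size s - (index x s).+1) = x.
  by rewrite nth_rev; [rewrite subnSK // subKn ?nth_index // ltnW | lia].
rewrite -{1}E index_uniq ?size_rev ?rev_uniq //; lia.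
Qed.

(* The blocks are the intervals [nth (2 :: ks) i, nth ks i) of positions,
   counted from 2 as in the interior of a standard pair. *)
Definition reversed_blocks (f g : T -> nat) (ks : seq nat) :=
  forall i (x : T), i < size ks ->
    let lo := nth 0 (2 :: ks) i in let hi := nth 0 ks i in
    (lo <= f x < hi) = (lo <= g x < hi) /\
    (lo <= f x < hi -> f x + g x = lo + hi - 1).

Lemma layered_last_block t b V (x : T) : perm_eq t b -> uniq V ->
  let lo := (size t).+2 in let hi := (size (t ++ V)).+2 in
  (lo <= (index x (t ++ V)).+2 < hi) = (lo <= (index x (b ++ rev V)).+2 < hi) /\
  (lo <= (index x (t ++ V)).+2 < hi ->
   (index x (t ++ V)).+2 + (index x (b ++ rev V)).+2 = lo + hi - 1).
Proof.
move=> Hperm HuV /=; have HsB : size b = size t by rewrite (perm_size Hperm).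
rewrite !index_cat -(perm_mem Hperm) !size_cat HsB.
case: (boolP (x \in t)) => HxT.
  have := index_mem x t; rewrite HxT => H1.
  have := index_mem x b; rewrite -(perm_mem Hperm) HxT HsB => H1'.
  by split; [apply/idP/idP; lia | lia].
case: (boolP (x \in V)) => HxV.
  have H1 := index_rev HuV HxV.
  have := index_mem x V; rewrite HxV => H2.
  have := index_mem x (rev V); rewrite mem_rev HxV size_rev => H3.
  by split; [apply/idP/idP; lia | lia].
rewrite !memNindex ?mem_rev // size_rev.
by split; [apply/idP/idP; lia | lia].
Qed.

Lemma layered_blocks t b : layered t b -> uniq t ->
  exists ks : seq nat,
    [/\ path ltn 2 ks, last 2 ks = (size t).+2,
        forall i, i < size ks -> nth 0 ks i <= (size t).+2 &
        reversed_blocks (fun x : T => (index x t).+2) (fun x : T => (index x b).+2) ks].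
Proof.
elim=> [|t0 b0 V HL IH HV] Hu; first by exists [::]; split.
have HuT0 : uniq t0 by move: Hu; rewrite cat_uniq => /andP [].
have HuV : uniq V by move: Hu; rewrite cat_uniq => /and3P [].
have [ks [Hp Hl Hle Hb]] := IH HuT0.
have Hperm := layered_perm HL.
have HsB : size b0 = size t0 by rewrite (perm_size Hperm).
have HV0 : 0 < size V by rewrite lt0n size_eq0.
exists (rcons ks (size (t0 ++ V)).+2); split.
- by rewrite rcons_path Hp /= Hl size_cat; lia.
- by rewrite last_rcons.
- move=> i; rewrite size_rcons ltnS nth_rcons leq_eqVlt.
  case/orP => [/eqP ->|Hi]; first by rewrite ltnn eqxx.
  by rewrite Hi size_cat; move: (Hle i Hi); lia.
move=> i x /=; rewrite size_rcons ltnS leq_eqVlt -rcons_cons !nth_rcons /=.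
case/orP => [/eqP ->|Hi]; last first.
  have Hi' : i < (size ks).+1 by rewrite ltnS ltnW.
  rewrite Hi Hi'; have [Hb1 Hb2] := Hb i x Hi; have Hle' := Hle i Hi.
  rewrite !index_cat -(perm_mem Hperm).
  case: (boolP (x \in t0)) => HxT; first by split.
  have := index_mem x t0; rewrite (negbTE HxT) => H1.
  have := index_mem x b0; rewrite -(perm_mem Hperm) (negbTE HxT) HsB => H2.
  by split; [apply/idP/idP; lia | lia].
rewrite ltnn eqxx ltnSn.
have -> : nth 0 (2 :: ks) (size ks) = (size t0).+2.
  by have := nth_last 0 (2 :: ks); rewrite /= => ->.
exact: layered_last_block.
Qed.

End BlockSwap.

Section Rows.
Variable A : finType.
Implicit Types (s r q : seq A) (p : pairT A).

Definition pos s (a : A) : nat := (index a s).+1.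
Definition rows_pair s r : pairT A := (pos s, pos r).
Definition full_row s := perm_eq s (enum A).
Definition prefix_irreducible s r :=
  forall k, 0 < k < #|A| -> ~ (take k s =i take k r).
Definition irreducible_rows s r :=
  [/\ full_row s, full_row r & prefix_irreducible s r].

Lemma full_row_uniq s : full_row s -> uniq s.
Proof. by move=> H; rewrite (perm_uniq H) enum_uniq. Qed.

Lemma full_row_size s : full_row s -> size s = #|A|.
Proof. by move=> H; rewrite (perm_size H) cardE. Qed.

Lemma full_row_mem s a : full_row s -> a \in s.
Proof. by move=> H; rewrite (perm_mem H) mem_enum. Qed.

Lemma prefix_irreducible_sym s r : prefix_irreducible s r -> prefix_irreducible r s.
Proof. by move=> H k Hk E; apply: (H k Hk) => a; rewrite E. Qed.

Lemma is_bij_pos s : full_row s -> is_bij (pos s).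
Proof.
move=> H; split.
- by move=> a; rewrite /pos /= -(full_row_size H) index_mem full_row_mem.
- by move=> a b [] /(index_inj a (full_row_mem a H) (full_row_mem b H)).
- move=> k /andP [H1 H2]; case: s H => [|a0 s'] H.
    by move: (full_row_size H) H2 => /= <-; case: k H1.
  exists (nth a0 (a0 :: s') k.-1); rewrite /pos index_uniq ?(full_row_uniq H) //.
    by case: k H1 {H2}.
  by rewrite (full_row_size H); case: k H1 H2.
Qed.

Lemma pos_of_bij (a0 : A) (f : A -> nat) : is_bij f -> exists2 s, full_row s & pos s =1 f.
Proof.
case=> Hrange Hinj Hsurj.
pose g k := odflt a0 [pick a | f a == k].
have Hg k : 1 <= k <= #|A| -> f (g k) = k.
  move=> Hk; rewrite /g; case: pickP => [a /eqP // | H].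
  by case: (Hsurj k Hk) => a Ha; move: (H a); rewrite Ha eqxx.
have Hga a : g (f a) = a by apply: Hinj; apply: Hg.
pose s := [seq g k | k <- iota 1 #|A|].
have Hs : size s = #|A| by rewrite size_map size_iota.
have Hfa a : (f a).-1 < #|A| by have /andP [H1 H2] := Hrange a; rewrite -ltnS prednK.
have Hnth a : nth a0 s (f a).-1 = a.
  have /andP [H1 _] := Hrange a.
  by rewrite (nth_map 0) ?size_iota // nth_iota // add1n prednK.
have Hu : uniq s.
  rewrite map_inj_in_uniq ?iota_uniq // => k1 k2; rewrite !mem_iota add1n ltnS => H1 H2 E.
  by rewrite -(Hg k1 H1) E Hg.
exists s.
  apply: uniq_perm => //; first exact: enum_uniq.
  by move=> a; rewrite mem_enum -(Hnth a) mem_nth // Hs.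
move=> a; rewrite /pos -{1}(Hnth a) index_uniq ?Hs //.
by have /andP [H1 _] := Hrange a; rewrite prednK.
Qed.

Lemma pos_take s k : full_row s ->
  [set a | 1 <= pos s a <= k] = [set a | a \in take k s].
Proof. by move=> H; apply/setP => a; rewrite !inE /pos /= in_take ?full_row_mem. Qed.

Lemma irreducible_rows_pair s r : irreducible_rows s r -> irreducible (rows_pair s r).
Proof.
case=> Hs Hr Hi; split; first by split; apply: is_bij_pos.
move=> k Hk; rewrite /rows_pair /= !pos_take //.
apply/negP => /eqP E; apply: (Hi k Hk) => a.
by move/setP: E => /(_ a); rewrite !inE.
Qed.

Lemma prefix_irreducible_of_pair s r : full_row s -> full_row r ->
  irreducible (rows_pair s r) -> prefix_irreducible s r.
Proof.
move=> Hs Hr [_ H] k Hk E; move: (H k Hk); rewrite /rows_pair /= !pos_take //.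
by move/eqP; apply; apply/setP => a; rewrite !inE E.
Qed.

Lemma index_rcons_last r (z : A) : uniq (rcons r z) -> index z (rcons r z) = size r.
Proof.
rewrite rcons_uniq => /andP [Hz _]; rewrite -cats1 index_cat (negbTE Hz) /=.
by rewrite eqxx addn0.
Qed.

Lemma last_letter_rows p e r z :
  row p e = pos (rcons r z) -> full_row (rcons r z) -> last_letter p e = Some z.
Proof.
move=> He Hr; have Hu := full_row_uniq Hr; have Hs := full_row_size Hr.
rewrite size_rcons in Hs.
rewrite /last_letter He; case: pickP => [a Ha | H].
  congr Some; move/eqP: Ha; rewrite /pos -Hs => -[] Ea.
  apply: (index_inj a (full_row_mem a Hr)); first by rewrite mem_rcons mem_head.
  by rewrite index_rcons_last.
by move: (H z); rewrite /pos index_rcons_last // Hs eqxx.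
Qed.

Lemma rauzy_row_rows p e r z P Q w :
  row p e = pos (rcons r z) -> row p (~~ e) = pos (P ++ z :: rcons Q w) ->
  full_row (rcons r z) -> full_row (P ++ z :: rcons Q w) ->
  rauzy_row p e =1 pos (P ++ z :: w :: Q).
Proof.
move=> He Hne Hr Hq b.
have Hu := full_row_uniq Hq; have Hsz := full_row_size Hq; have Hb := full_row_mem b Hq.
move: Hu; rewrite cat_uniq /= rcons_uniq mem_rcons inE has_rcons negb_or.
case/and5P=> _ /andP [HzP /norP [HwP _]] /norP [_ HzQ] HwQ _.
rewrite /rauzy_row (last_letter_rows He Hr) Hne /pos [index z _]index_cat (negbTE HzP) /= eqxx.
rewrite -Hsz size_cat /= size_rcons addn0.
case: (boolP (b \in P)) => HbP.
  have Hi : index b P < size P by rewrite index_mem.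
  by rewrite !index_cat HbP ifT //; lia.
rewrite !index_cat (negbTE HbP) /=.
case: (eqVneq z b) => [_|Hzb]; first by rewrite addn0 leqnn.
case: (eqVneq w b) => [<-|Hwb].
  rewrite -cats1 index_cat (negbTE HwQ) /= eqxx !addn0.
  by rewrite ifF ?ifF ?addn1 //; apply/negbTE; rewrite -leqNgt; clear; lia.
have HbQ : b \in Q.
  move: Hb; rewrite mem_cat (negbTE HbP) /= inE eq_sym (negbTE Hzb) /=.
  by rewrite mem_rcons inE eq_sym (negbTE Hwb).
have Hi : index b Q < size Q by rewrite index_mem.
rewrite -cats1 index_cat HbQ ifF ?ifT; first by rewrite !addnS.
  by clear -Hi; lia.
by apply/negbTE; rewrite -leqNgt; clear; lia.
Qed.

End Rows.

Section Rotation.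
Variable A : finType.
Implicit Types (s r q : seq A) (p : pairT A).

Definition class_rows p s r :=
  in_rauzy_class p (rows_pair s r) /\ irreducible_rows s r.

(* [r] is row [e] and [q] the other one. *)
Definition class_rows_at e p r q :=
  if e then class_rows p q r else class_rows p r q.

Lemma take_cat_cons_eq (P X Y : seq A) z k : k <= (size P).+1 ->
  take k (P ++ z :: X) = take k (P ++ z :: Y).
Proof.
move=> Hk; rewrite -!cat_rcons !take_cat size_rcons; case: ltnP => // Hk2.
have -> : k - (size P).+1 = 0 by apply/eqP; rewrite subn_eq0.
by rewrite !take0.
Qed.

Lemma prefix_irreducible_rotate r z P Q w :
  full_row (rcons r z) -> full_row (P ++ z :: rcons Q w) ->
  prefix_irreducible (rcons r z) (P ++ z :: rcons Q w) ->
  prefix_irreducible (rcons r z) (P ++ z :: w :: Q).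
Proof.
move=> Hr Hq Hi k Hk E.
have HzP : z \notin P.
  by move: (full_row_uniq Hq); rewrite cat_uniq /= => /and3P [_ /norP []].
case: (leqP k (size P).+1) => Hk'.
  by apply: (Hi k Hk) => a; rewrite E (@take_cat_cons_eq P (w :: Q) (rcons Q w) z k Hk').
have Hz1 : z \in take k (P ++ [:: z, w & Q]).
  have Hzq : z \in P ++ [:: z, w & Q] by rewrite mem_cat mem_head orbT.
  by rewrite (in_take _ Hzq) index_cat (negbTE HzP) /= eqxx addn0 ltnW.
have Hz2 : z \notin take k (rcons r z).
  have Hs := full_row_size Hr; rewrite size_rcons in Hs.
  rewrite (in_take _ (full_row_mem z Hr)) index_rcons_last ?full_row_uniq // -leqNgt.
  by move: Hk; rewrite -Hs => /andP [_]; rewrite ltnS.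
by move: Hz2; rewrite E Hz1.
Qed.

Lemma class_rows_rotate1 e p r z P Q w :
  class_rows_at e p (rcons r z) (P ++ z :: rcons Q w) ->
  class_rows_at e p (rcons r z) (P ++ z :: w :: Q).
Proof.
have Hperm : perm_eq (P ++ z :: w :: Q) (P ++ z :: rcons Q w).
  by rewrite perm_cat2l perm_cons perm_sym perm_rcons.
case: e => -[Hc [H0 H1 H2]] /=.
- have := rc_step true Hc (irreducible_rows_pair (And3 H0 H1 H2)).
  rewrite /rauzy /rows_pair /= (functional_extensionality _ _ (rauzy_row_rows _ _ H1 H0)) //.
  move=> Hc'; split=> //; split=> //; first exact: perm_trans Hperm H0.
  exact/prefix_irreducible_sym/prefix_irreducible_rotate/prefix_irreducible_sym.
- have := rc_step false Hc (irreducible_rows_pair (And3 H0 H1 H2)).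
  rewrite /rauzy /rows_pair /= (functional_extensionality _ _ (rauzy_row_rows _ _ H0 H1)) //.
  move=> Hc'; split=> //; split=> //; first exact: perm_trans Hperm H1.
  exact: prefix_irreducible_rotate.
Qed.

(* Repeating the move that keeps the winner [z] rotates the part of the other
   row that follows [z]. *)
Lemma class_rows_rotate e p r q q' r0 z P Q1 Q2 :
  r = rcons r0 z -> q = P ++ z :: Q1 ++ Q2 -> q' = P ++ z :: Q2 ++ Q1 ->
  class_rows_at e p r q -> class_rows_at e p r q'.
Proof.
move=> -> -> ->; elim/last_ind: Q2 Q1 => [|Q2 w IH] Q1; first by rewrite cats0.
rewrite -rcons_cat => /class_rows_rotate1 H.
by rewrite cat_rcons; apply: (IH (w :: Q1)).
Qed.

End Rotation.

Section Standard.
Variable A : finType.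
Implicit Types (s r q : seq A) (p : pairT A).

Lemma class_rows_rotate_twice p t z P S w y :
  class_rows p (rcons t z) (P ++ z :: S) -> w \in S -> y \in rcons t z ->
  index w (rcons t z) < index y (rcons t z) ->
  exists t' S', class_rows p (rcons t' y) (P ++ S').
Proof.
move=> HR HwS Hyt Hwy; have [_ [Ht _ _]] := HR.
case/splitPr: HwS HR => S1 S2 HR.
have HR1 : class_rows_at false p (rcons t z) (P ++ z :: S2 ++ rcons S1 w).
  apply: (@class_rows_rotate _ false p _ _ _ t z P (rcons S1 w) S2) => //.
  by rewrite cat_rcons.
case/splitPr ET: {1}(rcons t z) / (full_row_mem w Ht) => [T1 T2].
have HwT1 : w \notin T1.
  by move: (full_row_uniq Ht); rewrite ET cat_uniq /= => /and3P [_ /norP [] ].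
have HyT2 : y \in T2.
  move: Hyt Hwy; rewrite ET [index w _]index_cat (negbTE HwT1) /= eqxx addn0 mem_cat inE.
  case/or3P=> [HyT1|/eqP ->|//]; last by rewrite index_cat (negbTE HwT1) /= eqxx addn0 ltnn.
  by rewrite index_cat HyT1 ltnNge ltnW // index_mem.
case/splitPr: HyT2 ET => A1 C ET.
have HR2 : class_rows_at true p (rcons (P ++ z :: S2 ++ S1) w) (T1 ++ w :: C ++ rcons A1 y).
  apply: (@class_rows_rotate _ true p _ (rcons t z) _ (P ++ z :: S2 ++ S1) w T1 (rcons A1 y) C).
  - by rewrite rcons_cat rcons_cons rcons_cat.
  - by rewrite ET cat_rcons.
  - by [].
  - by rewrite /class_rows_at rcons_cat rcons_cons rcons_cat.
exists (T1 ++ w :: C ++ A1), (z :: S2 ++ rcons S1 w).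
by move: HR2; rewrite /class_rows_at !(rcons_cat, rcons_cons).
Qed.

(* The rows disagree on their first [index z b] letters: some [y] occurs there
   only in [b] and some [w] only in [rcons t z]. Two rotations, behind [z] and
   then behind [w], make [y] the last letter of the top row while keeping the
   part of [b] before [z]. *)
Lemma class_rows_descend p t z b : 0 < index z b ->
  class_rows p (rcons t z) b ->
  exists t' y b', class_rows p (rcons t' y) b' /\ index y b' < index z b.
Proof.
move=> Hi0 HR; have [_ [Ht Hb Hirr]] := HR.
set i := index z b in Hi0 *.
have Hib : i < size b by rewrite index_mem full_row_mem.
have Hst : size (rcons t z) = size b by rewrite !full_row_size.
have Hne : ~ take i (rcons t z) =i take i b.
  by apply: Hirr; rewrite Hi0 -(full_row_size Hb) Hib.
have [y HyP Hyt] : exists2 y, y \in take i b & y \notin take i (rcons t z).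
  apply: uniq_not_eqi_witness; rewrite ?take_uniq ?full_row_uniq //.
    by rewrite !size_take Hst.
  by move=> E; apply: Hne => a; rewrite E.
have [w Hwt HwP] : exists2 w, w \in take i (rcons t z) & w \notin take i b.
  apply: uniq_not_eqi_witness; rewrite ?take_uniq ?full_row_uniq //.
  by rewrite !size_take Hst.
have Hiw : index w (rcons t z) < i by apply: index_ltn.
have Hiy : i <= index y (rcons t z).
  by rewrite leqNgt -(in_take _ (full_row_mem y Ht)).
have Hwz : w != z.
  apply: contraTneq Hiw => ->; rewrite index_rcons_last ?full_row_uniq // -leqNgt.
  by move: Hib; rewrite -Hst size_rcons ltnS.
have Eb : b = take i b ++ z :: drop i.+1 b.
  by rewrite -{1}(cat_take_drop i b) (drop_nth z Hib) nth_index ?full_row_mem.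
have HwS : w \in drop i.+1 b.
  by move: (full_row_mem w Hb); rewrite {1}Eb mem_cat (negbTE HwP) inE (negbTE Hwz).
rewrite Eb in HR.
have [t' [S' HR']] := class_rows_rotate_twice HR HwS (full_row_mem y Ht) (leq_trans Hiw Hiy).
exists t', y, (take i b ++ S'); split=> //.
by rewrite index_cat HyP -{2}(size_takel (ltnW Hib)) index_mem.
Qed.

Lemma class_rows_last_first p t z b : class_rows p (rcons t z) b ->
  exists t' z' S, class_rows p (rcons t' z') (z' :: S).
Proof.
move Hm : (index z b) => m; elim/ltn_ind: m t z b Hm => m IH t z b Hm HR.
case: (posnP m) => [Hm0|Hm0].
  have [_ [_ /(full_row_mem z) Hzb _]] := HR.
  case: b Hm HR Hzb => [|c S] //= Hm HR _.
  by move: Hm HR; rewrite Hm0; case: eqP => // <- _; exists t, c, S.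
rewrite -Hm in Hm0.
have [t' [y [b' [HR' Hlt]]]] := class_rows_descend Hm0 HR.
by apply: (IH (index y b')) HR' => //; rewrite -Hm.
Qed.

Lemma class_rows_standard p t z b : 2 <= #|A| -> class_rows p (rcons t z) b ->
  exists a T z' B, class_rows p (a :: rcons T z') (z' :: rcons B a).
Proof.
move=> HA /class_rows_last_first [t' [z' [S HR]]].
have [_ [Ht Hb _]] := HR.
case: t' HR Ht => [|a T] HR Ht; first by move: HA; rewrite -(full_row_size Ht).
have Haz : a != z'.
  move: (full_row_uniq Ht) => /= /andP [+ _]; apply: contraNneq => ->.
  by rewrite mem_rcons mem_head.
have HaS : a \in S by move: (full_row_mem a Hb); rewrite inE (negbTE Haz).
case/splitPr: HaS HR => S1 S2 HR.
exists a, T, z', (S2 ++ S1).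
apply: (@class_rows_rotate _ false p _ (z' :: S1 ++ a :: S2) _ (a :: T) z'
          [::] (rcons S1 a) S2) => //.
- by rewrite cat_rcons.
- by rewrite /= rcons_cat.
Qed.

End Standard.

Section Swaps.
Variable A : finType.
Implicit Types (p : pairT A).

(* Four rotations, alternating the winner between [z] and [a]. *)
Lemma class_rows_swap p (a z : A) x y : swap_step x y ->
  class_rows p (a :: rcons x.1 z) (z :: rcons x.2 a) ->
  class_rows p (a :: rcons y.1 z) (z :: rcons y.2 a).
Proof.
case=> [X1 [Y1 [R1 [X2 [Y2 [R2 [w [v [-> ->]]]]]]]]] /= H0.
set t0 := a :: rcons (rcons X1 w ++ rcons Y1 v ++ R1) z.
set q1 := z :: (rcons Y2 v ++ rcons R2 a) ++ rcons X2 w.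
have HA : class_rows_at false p t0 q1.
  apply: (@class_rows_rotate _ false p t0 (z :: rcons (rcons X2 w ++ rcons Y2 v ++ R2) a)
            q1 (a :: rcons X1 w ++ rcons Y1 v ++ R1) z [::] (rcons X2 w)
            (rcons Y2 v ++ rcons R2 a)) => //;
    rewrite /t0 /q1; by seq_norm.
set t1 := (a :: X1) ++ w :: rcons R1 z ++ rcons Y1 v.
have HB : class_rows_at true p q1 t1.
  apply: (@class_rows_rotate _ true p q1 t0 t1 (z :: rcons Y2 v ++ rcons R2 a ++ X2) w
            (a :: X1) (rcons Y1 v) (rcons R1 z)) => //;
    rewrite /t0 /q1 /t1; by seq_norm.
set q2 := (z :: Y2) ++ v :: rcons X2 w ++ rcons R2 a.
have HC : class_rows_at false p t1 q2.
  apply: (@class_rows_rotate _ false p t1 q1 q2 ((a :: X1) ++ w :: rcons R1 z ++ Y1) v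
            (z :: Y2) (rcons R2 a) (rcons X2 w)) => //;
    rewrite /t1 /q1 /q2; by seq_norm.
have HD : class_rows_at true p q2 (a :: rcons Y1 v ++ rcons X1 w ++ rcons R1 z).
  apply: (@class_rows_rotate _ true p q2 t1 _ (z :: Y2 ++ v :: rcons X2 w ++ R2) a
            [::] (rcons X1 w ++ rcons R1 z) (rcons Y1 v)) => //;
    rewrite /t1 /q2; by seq_norm.
by move: HD; rewrite /class_rows_at /q2; seq_norm.
Qed.

Lemma class_rows_swap_reach p (a z : A) x y : swap_reach x y ->
  class_rows p (a :: rcons x.1 z) (z :: rcons x.2 a) ->
  class_rows p (a :: rcons y.1 z) (z :: rcons y.2 a).
Proof.
elim=> [{}x {}y Hs|//|{}x y' w _ H1 _ H2 H].
- exact: class_rows_swap.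
- exact/H2/H1.
Qed.

End Swaps.

Section Final.
Variable A : finType.

Lemma pos_cons_rcons (a z x : A) T : full_row (a :: rcons T z) ->
  pos (a :: rcons T z) x = if a == x then 1 else (index x T).+2.
Proof.
move=> H; rewrite /pos /=; case: eqP => // /eqP Hax.
have := full_row_uniq H; rewrite /= rcons_uniq => /and3P [_ HzT _].
have : x \in rcons T z by move: (full_row_mem x H); rewrite inE eq_sym (negbTE Hax).
rewrite -cats1 index_cat mem_cat inE; case: ifP => //= _ /eqP ->.
by rewrite eqxx addn0 memNindex.
Qed.

Lemma standard_rows (a z : A) T B :
  full_row (a :: rcons T z) -> full_row (z :: rcons B a) ->
  standard (rows_pair (a :: rcons T z) (z :: rcons B a)).
Proof.
move=> Ht Hb; have Hst := full_row_size Ht; have Hsb := full_row_size Hb.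
have := full_row_uniq Ht; rewrite /= rcons_uniq mem_rcons inE => /and3P [/norP [Haz _] HzT _].
have := full_row_uniq Hb; rewrite /= rcons_uniq => /and3P [_ HaB _].
rewrite /= !size_rcons in Hst Hsb.
have Hza : (z == a) = false by rewrite eq_sym (negbTE Haz).
split; [exists a | exists z]; rewrite /rows_pair /= !pos_cons_rcons // eqxx ?Hza ?(negbTE Haz).
- by rewrite memNindex.
- by rewrite memNindex.
Qed.

Lemma standard_rows_perm (a z : A) T B :
  full_row (a :: rcons T z) -> full_row (z :: rcons B a) -> perm_eq T B.
Proof.
rewrite /full_row => Ht; rewrite perm_sym => /(perm_trans Ht) /permP Hc.
by apply/permP => P; move: (Hc P); rewrite /= -!cats1 !count_cat /=; lia.
Qed.

Lemma layered_pw_order_reversing (a z : A) T B :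
  full_row (a :: rcons T z) -> full_row (z :: rcons B a) -> layered T B ->
  pw_order_reversing (rows_pair (a :: rcons T z) (z :: rcons B a)).
Proof.
move=> Ht Hb HL; split; first exact: standard_rows.
have := full_row_uniq Ht; rewrite /= rcons_uniq mem_rcons inE => /and3P [/norP [Haz HaT] HzT HuT].
have := full_row_uniq Hb; rewrite /= rcons_uniq mem_rcons inE => /and3P [/norP [_ HzB] HaB _].
have Hst := full_row_size Ht; have Hsb := full_row_size Hb.
rewrite /= !size_rcons in Hst Hsb.
have [ks [Hp Hl Hle Hblk]] := layered_blocks HL HuT.
exists ks; split=> //; first by rewrite Hl Hst.
move=> i Hi; set lo := nth 0 (2 :: ks) i; set hi := nth 0 ks i.
have Hlo : 1 < lo.
  rewrite /lo; case: i Hi {lo hi} => [|j] Hj //=; apply: ltnW.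
  by move/order_path_min: Hp => /(_ ltn_trans) /all_nthP; apply; apply: ltnW.
have Hhi : hi <= (size T).+2 := Hle i Hi.
have Et x : (lo <= pos (a :: rcons T z) x < hi) = (lo <= (index x T).+2 < hi).
  rewrite pos_cons_rcons //; case: eqP => [<-|_] //.
  by rewrite (memNindex HaT) [lo <= 1]leqNgt Hlo /= ltnNge Hhi andbF.
have Eb x : (lo <= pos (z :: rcons B a) x < hi) = (lo <= (index x B).+2 < hi).
  rewrite pos_cons_rcons //; case: eqP => [<-|_] //.
  by rewrite (memNindex HzB) [lo <= 1]leqNgt Hlo /= ltnNge Hsb -Hst Hhi andbF.
split=> [|x].
  by apply/setP => x; rewrite !inE /rows_pair /= Et Eb (Hblk i x Hi).1.
rewrite /rows_pair /= => Hxt.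
have Hxb : lo <= pos (z :: rcons B a) x < hi by rewrite Eb -(Hblk i x Hi).1 -Et.
rewrite -((Hblk i x Hi).2 _); last by rewrite -Et.
move: Hxt Hxb; rewrite !pos_cons_rcons //.
by do 2 case: eqP => _; rewrite ?[lo <= 1]leqNgt ?Hlo //.
Qed.

End Final.

Theorem theorem3p1 (A : finType) (p : pairT A) :
  2 <= #|A| -> irreducible p ->
  exists q, in_rauzy_class p q /\ pw_order_reversing q.
Proof.
move=> HA Hirr; have /card_gt0P [a0 _] : 0 < #|A| by apply: leq_trans HA.
have [[Hb0 Hb1] _] := Hirr.
have [s0 E0 P0] := pos_of_bij a0 Hb0; have [s1 E1 P1] := pos_of_bij a0 Hb1.
have Ep : p = rows_pair s0 s1.
  by case: p {Hirr Hb0 Hb1} P0 P1 => f g P0 P1; congr pair; apply: functional_extensionality.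
have HR : class_rows p s0 s1.
  rewrite /class_rows -Ep; split; [exact: rc_refl | split=> //].
  by apply: prefix_irreducible_of_pair => //; rewrite -Ep.
case/lastP: s0 E0 HR {P0 Ep} => [|t z] E0 HR; first by move: HA; rewrite -(full_row_size E0).
have [a [T [z' [B HR2]]]] := class_rows_standard HA HR.
have [_ [Ht Hb _]] := HR2.
have HuT : uniq T by move: (full_row_uniq Ht); rewrite /= rcons_uniq => /and3P [].
have [T' [B' [HS HL]]] := swap_reach_layered HuT (standard_rows_perm Ht Hb).
have [HR3 [Ht' Hb' _]] := class_rows_swap_reach HS HR2.
exists (rows_pair (a :: rcons T' z') (z' :: rcons B' a)).
by split; last exact: layered_pw_order_reversing.
Qed.
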